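(* Let $0<\varepsilon\le 0.1$, let $\Box$ be a closed axis-parallel square of side length $\varepsilon$ with center $o$, and let $R\subseteq\Box$ be a nonempty circular domain. For every non-vertex point $p\in\partial(R\oplus D)$, $\big|\mathsf{ang}(\overrightarrow{op},\mathsf{tan}_p)-\tfrac{\pi}{2}\big|\le 4\varepsilon$.
   Context: A circular arc is a connected portion of a circle in $\mathbb{R}^2$ (segments included). A circular domain is a closed subset of $\mathbb{R}^2$ whose boundary consists of finitely many circular arcs intersecting only at their endpoints (finite point sets are also allowed). $D$ is the closed unit disk centered at the origin and $\oplus$ denotes Minkowski sum. $\partial(R\oplus D)$ is a simple closed curve consisting of circular arcs, and each ray from $o$ meets it exactly once. A non-vertex point of $\partial(R\oplus D)$ is a point in the relative interior of one of its boundary arcs; at such a point $p$ the tangent line is unique, and the clockwise tangent $\mathsf{tan}_p$ is the unit vector along this tangent line such that moving $p$ along $\partial(R\oplus D)$ in direction $\mathsf{tan}_p$ rotates $\overrightarrow{op}$ clockwise. For nonzero vectors $\vec u,\vec v$, $\mathsf{ang}(\vec u,\vec v)\in[0,2\pi)$ is the clockwise ordered angle from $\vec u$ to $\vec v$ (the angle swept when rotating $\vec u$ clockwise until it points in the direction of $\vec v$). *)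

From Stdlib Require Import Reals Lra List.
Open Scope R_scope.

Definition pt := (R * R)%type.
Definition padd (p q : pt) : pt := (fst p + fst q, snd p + snd q).
Definition psub (p q : pt) : pt := (fst p - fst q, snd p - snd q).
Definition pscal (k : R) (p : pt) : pt := (k * fst p, k * snd p).
Definition pnorm (p : pt) : R := sqrt (fst p ^ 2 + snd p ^ 2).
(* cross u v > 0 iff v points counterclockwise from u *)
Definition cross (u v : pt) : R := fst u * snd v - snd u * fst v.

(* CArc c r t1 t2 : points c + r (cos t, sin t), t in [t1,t2];
   Seg a b       : points a + t (b - a),       t in [0,1]. *)
Inductive arc := CArc (c : pt) (r t1 t2 : R) | Seg (a b : pt).

Definition arc_wf (A : arc) : Prop :=
  match A with
  | CArc _ r t1 t2 => 0 < r /\ t1 < t2 /\ t2 - t1 <= 2 * PI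
  | Seg a b => a <> b
  end.

Definition arc_lo (A : arc) : R := match A with CArc _ _ t1 _ => t1 | Seg _ _ => 0 end.
Definition arc_hi (A : arc) : R := match A with CArc _ _ _ t2 => t2 | Seg _ _ => 1 end.

Definition arc_pt (A : arc) (t : R) : pt :=
  match A with
  | CArc c r _ _ => padd c (r * cos t, r * sin t)
  | Seg a b => padd a (pscal t (psub b a))
  end.

Definition arc_dir (A : arc) (t : R) : pt :=
  match A with
  | CArc _ _ _ _ => (- sin t, cos t)
  | Seg a b => pscal (/ pnorm (psub b a)) (psub b a)
  end.

Definition on_arc (A : arc) (p : pt) : Prop :=
  exists t, arc_lo A <= t <= arc_hi A /\ p = arc_pt A t.

Definition arc_endpoint (A : arc) (p : pt) : Prop :=
  p = arc_pt A (arc_lo A) \/ p = arc_pt A (arc_hi A).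

Definition is_closed (S : pt -> Prop) : Prop :=
  forall p, (forall e, 0 < e -> exists q, S q /\ pnorm (psub q p) < e) -> S p.

Definition boundary (S : pt -> Prop) (p : pt) : Prop :=
  (forall e, 0 < e -> exists q, S q /\ pnorm (psub q p) < e) /\
  (forall e, 0 < e -> exists q, ~ S q /\ pnorm (psub q p) < e).

Definition circular_domain (S : pt -> Prop) : Prop :=
  is_closed S /\
  exists (arcs : list arc) (pts : list pt),
    Forall arc_wf arcs /\
    (forall p, boundary S p <-> ((exists A, In A arcs /\ on_arc A p) \/ In p pts)) /\
    (forall i j, (i < length arcs)%nat -> (j < length arcs)%nat -> i <> j ->
       forall p, on_arc (nth i arcs (Seg (0,0) (0,0))) p ->
                 on_arc (nth j arcs (Seg (0,0) (0,0))) p ->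
                 arc_endpoint (nth i arcs (Seg (0,0) (0,0))) p /\
                 arc_endpoint (nth j arcs (Seg (0,0) (0,0))) p).

Definition in_square (o : pt) (eps : R) (p : pt) : Prop :=
  Rabs (fst p - fst o) <= eps / 2 /\ Rabs (snd p - snd o) <= eps / 2.

Definition mink_D (S : pt -> Prop) (p : pt) : Prop :=
  exists r d, S r /\ pnorm d <= 1 /\ p = padd r d.

Definition tangent_unit (S : pt -> Prop) (p u : pt) : Prop :=
  exists A t,
    arc_wf A /\
    (forall s, arc_lo A <= s <= arc_hi A -> boundary S (arc_pt A s)) /\
    arc_lo A < t < arc_hi A /\ p = arc_pt A t /\
    (u = arc_dir A t \/ u = pscal (-1) (arc_dir A t)).

Definition non_vertex (S : pt -> Prop) (p : pt) : Prop :=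
  exists u, tangent_unit S p u.

Definition rotates_cw (o p u : pt) : Prop := cross (psub p o) u < 0.

Definition is_cw_ang (u v : pt) (th : R) : Prop :=
  u <> (0, 0) /\ v <> (0, 0) /\ 0 <= th < 2 * PI /\
  let a := pscal (/ pnorm u) u in
  let b := pscal (/ pnorm v) v in
  b = (fst a * cos th + snd a * sin th, - fst a * sin th + snd a * cos th).

(* Every boundary point p of R (+) D is at distance >= 1 from R and at distance
   arbitrarily close to 1 from some point q of R.  A boundary arc through p thus
   stays outside the open unit disc around q while almost touching its boundary
   circle at p; comparing the arc at parameters t0 +- s shows that its tangent u
   at p is almost orthogonal to p - q.  As |q - o| <= eps / sqrt 2, this gives
   |<p - o, u>| <= 3/4 eps while |p - o| >= 3/4, so the cosine of the clockwise
   angle from p - o to u is at most eps in absolute value and the angle is within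
   asin eps <= 4 eps of pi/2. *)

From Stdlib Require Import Reals Lra Psatz.
Open Scope R_scope.

Definition dot (u v : pt) : R := fst u * fst v + snd u * snd v.
Definition nsq (u : pt) : R := fst u ^ 2 + snd u ^ 2.

Lemma nsq_ge0 u : 0 <= nsq u.
Proof. unfold nsq; nra. Qed.

Lemma pnorm_ge0 u : 0 <= pnorm u.
Proof. apply sqrt_pos. Qed.

Lemma pnorm_sq u : pnorm u * pnorm u = nsq u.
Proof. apply sqrt_sqrt, nsq_ge0. Qed.

Lemma nsq_pos u : u <> (0, 0) -> 0 < nsq u.
Proof.
  destruct u as [x y]; unfold nsq; simpl; intros Hu.
  destruct (Req_dec x 0) as [->|Hx]; [destruct (Req_dec y 0) as [->|Hy]|].
  - now destruct Hu.
  - pose proof (Rsqr_pos_lt y Hy). rewrite Rsqr_pow2 in *. lra.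
  - pose proof (Rsqr_pos_lt x Hx). rewrite Rsqr_pow2 in *. pose proof (pow2_ge_0 y). lra.
Qed.

Lemma pnorm_pos u : u <> (0, 0) -> 0 < pnorm u.
Proof. intros Hu. apply sqrt_lt_R0, nsq_pos, Hu. Qed.

Lemma nsq_padd u v : nsq (padd u v) = nsq u + 2 * dot u v + nsq v.
Proof. unfold nsq, dot, padd; simpl; ring. Qed.

Lemma psub_padd_l p v q : psub (padd p v) q = padd (psub p q) v.
Proof. unfold psub, padd; simpl; f_equal; ring. Qed.

Lemma lagrange_identity u v : cross u v ^ 2 + dot u v ^ 2 = nsq u * nsq v.
Proof. unfold cross, dot, nsq; ring. Qed.

Lemma Rabs_le_of_sqr x k : 0 <= k -> x ^ 2 <= k ^ 2 -> Rabs x <= k.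
Proof. intros. unfold Rabs; destruct (Rcase_abs x); nra. Qed.

Lemma Rabs_dot_le u v k : 0 <= k -> nsq u * nsq v <= k ^ 2 -> Rabs (dot u v) <= k.
Proof.
  intros Hk Huv. apply Rabs_le_of_sqr; [exact Hk|].
  rewrite <- lagrange_identity in Huv. nra.
Qed.

Lemma nsq_le_of_pnorm u k : 0 <= k -> pnorm u <= k -> nsq u <= k ^ 2.
Proof. intros. rewrite <- pnorm_sq. pose proof (pnorm_ge0 u). nra. Qed.

Lemma nsq_lt_of_pnorm u k : pnorm u < k -> nsq u < k ^ 2.
Proof. intros. rewrite <- pnorm_sq. pose proof (pnorm_ge0 u). nra. Qed.

Lemma pnorm_le_of_nsq u k : 0 <= k -> nsq u <= k ^ 2 -> pnorm u <= k.
Proof. intros. rewrite <- pnorm_sq in *. pose proof (pnorm_ge0 u). nra. Qed.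

Lemma pnorm_ge_of_nsq u k : 0 <= k -> k ^ 2 <= nsq u -> k <= pnorm u.
Proof. intros. rewrite <- pnorm_sq in *. pose proof (pnorm_ge0 u). nra. Qed.

(* Points within distance < 1 of [S] are interior points of [mink_D S]. *)
Lemma mink_D_boundary_far S x q : boundary (mink_D S) x -> S q -> 1 <= nsq (psub x q).
Proof.
  intros [_ Hout] Hq.
  destruct (Rle_lt_dec 1 (nsq (psub x q))) as [Hfar|Hnear]; [exact Hfar|exfalso].
  set (e := (1 - nsq (psub x q)) / 4).
  pose proof (nsq_ge0 (psub x q)) as Hk.
  destruct (Hout e) as [y [Hy Hyx]]; [unfold e; lra|].
  apply Hy. exists q, (psub y q). repeat split; [exact Hq| |].
  - apply pnorm_le_of_nsq; [lra|].
    apply nsq_lt_of_pnorm in Hyx.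
    assert (Hcross : Rabs (dot (psub y x) (psub x q)) <= e).
    { apply Rabs_dot_le; [unfold e; lra|].
      pose proof (nsq_ge0 (psub y x)). unfold e in *. nra. }
    replace (psub y q) with (padd (psub y x) (psub x q))
      by (unfold padd, psub; simpl; f_equal; ring).
    rewrite nsq_padd. pose proof (Rle_abs (dot (psub y x) (psub x q))).
    unfold e in *. nra.
  - unfold padd, psub; destruct y; simpl; f_equal; ring.
Qed.

Lemma mink_D_boundary_near S p d : boundary (mink_D S) p -> 0 < d <= 1 ->
  exists q, S q /\ nsq (psub p q) <= 1 + d.
Proof.
  intros [Hin _] Hd.
  destruct (Hin (d / 3)) as [y [[q [w [Hq [Hw ->]]]] Hyp]]; [lra|].
  exists q; split; [exact Hq|].
  apply nsq_lt_of_pnorm in Hyp. apply (nsq_le_of_pnorm w 1) in Hw; [|lra].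
  replace (psub p q) with (padd (psub p (padd q w)) w)
    by (unfold padd, psub; simpl; f_equal; ring).
  replace (nsq (psub (padd q w) p)) with (nsq (psub p (padd q w))) in Hyp
    by (unfold nsq, psub; simpl; ring).
  assert (Hcross : Rabs (dot (psub p (padd q w)) w) <= d / 3).
  { apply Rabs_dot_le; [lra|].
    pose proof (nsq_ge0 w). pose proof (nsq_ge0 (psub p (padd q w))). nra. }
  rewrite nsq_padd. pose proof (Rle_abs (dot (psub p (padd q w)) w)). nra.
Qed.

(* The sign of [dot D U] selects the inequality in which the first-order term
   [+- 2 B (dot D U)] is negative. *)
Lemma two_sided_dot_bound D U W B C d :
  nsq U = 1 -> nsq W <= 1 -> dot U W = 0 -> 0 < B -> d <= 1 -> nsq D <= 1 + d ->
  1 <= nsq (padd D (padd (pscal B U) (pscal C W))) ->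
  1 <= nsq (padd D (padd (pscal (- B) U) (pscal C W))) ->
  2 * B * Rabs (dot D U) <= d + 4 * Rabs C + B ^ 2 + C ^ 2.
Proof.
  intros HU HW HUW HB Hd HD Hplus Hminus.
  assert (Hexp : forall b, nsq (padd D (padd (pscal b U) (pscal C W)))
                 = nsq D + 2 * b * dot D U + 2 * C * dot D W + b ^ 2 + C ^ 2 * nsq W).
  { intro b.
    transitivity (nsq D + 2 * b * dot D U + 2 * C * dot D W + b ^ 2 * nsq U
                  + 2 * b * C * dot U W + C ^ 2 * nsq W);
      [unfold nsq, dot, padd, pscal; simpl; ring|].
    rewrite HU, HUW. ring. }
  rewrite Hexp in Hplus, Hminus.
  assert (HDW : Rabs (dot D W) <= 2).
  { apply Rabs_dot_le; [lra|]. pose proof (nsq_ge0 W). pose proof (nsq_ge0 D). nra. }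
  assert (HCW : C * dot D W <= 2 * Rabs C).
  { pose proof (Rabs_pos C). pose proof (Rle_abs (C * dot D W)).
    rewrite Rabs_mult in *. nra. }
  assert (C ^ 2 * nsq W <= C ^ 2) by (pose proof (pow2_ge_0 C); nra).
  unfold Rabs at 1; destruct (Rcase_abs (dot D U)); nra.
Qed.

(* The arc points at [t0 +- s] differ from the one at [t0] by a first-order
   displacement [+- B U] along the tangent and a common correction [C W]. *)
Definition arc_step (A : arc) (t0 k : R) : Prop :=
  exists s B C W,
    0 < s /\ arc_lo A <= t0 - s /\ t0 + s <= arc_hi A /\
    0 < B <= k /\ Rabs C <= k * B /\ nsq W <= 1 /\ dot (arc_dir A t0) W = 0 /\
    arc_pt A (t0 + s) = padd (arc_pt A t0) (padd (pscal B (arc_dir A t0)) (pscal C W)) /\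
    arc_pt A (t0 - s) = padd (arc_pt A t0) (padd (pscal (- B) (arc_dir A t0)) (pscal C W)).

Lemma circle_arc_step c r t1 t2 t0 k :
  0 < r -> t1 < t0 < t2 -> 0 < k <= 1 -> arc_step (CArc c r t1 t2) t0 k.
Proof.
  intros Hr Ht Hk. pose proof PI2_3_2 as HPI.
  set (s := Rmin (Rmin (t0 - t1) (t2 - t0)) (Rmin k (k / r))).
  assert (Hs : 0 < s /\ s <= t0 - t1 /\ s <= t2 - t0 /\ s <= k /\ s <= k / r).
  { assert (0 < k / r) by (apply Rdiv_lt_0_compat; lra).
    pose proof (Rmin_l (Rmin (t0 - t1) (t2 - t0)) (Rmin k (k / r))).
    pose proof (Rmin_r (Rmin (t0 - t1) (t2 - t0)) (Rmin k (k / r))).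
    pose proof (Rmin_l (t0 - t1) (t2 - t0)). pose proof (Rmin_r (t0 - t1) (t2 - t0)).
    pose proof (Rmin_l k (k / r)). pose proof (Rmin_r k (k / r)).
    repeat split; try (unfold s; lra).
    unfold s; repeat apply Rmin_glb_lt; lra. }
  destruct Hs as (Hs0 & Hs1 & Hs2 & Hs3 & Hs4).
  assert (Hrs : r * s <= k).
  { apply Rmult_le_compat_l with (r := r) in Hs4; [|lra].
    replace (r * (k / r)) with k in Hs4 by (field; lra). exact Hs4. }
  destruct (sin_bound s 0 ltac:(lra) ltac:(lra)) as [Hsin _].
  destruct (cos_bound s 0 ltac:(lra) ltac:(lra)) as [Hcos _].
  unfold sin_approx, cos_approx, sin_term, cos_term in Hsin, Hcos; simpl in Hsin, Hcos.
  pose proof (sin_lt_x s Hs0) as Hsin_up. pose proof (COS_bound s) as Hcos_up.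
  exists s, (r * sin s), (r * (cos s - 1)), (cos t0, sin t0).
  repeat split; try (simpl; lra).
  - apply Rmult_lt_0_compat; nra.
  - nra.
  - assert (Hsin_lo : 5 / 6 * s <= sin s) by nra.
    assert (Hsk : r * s * s <= r * s * k) by (apply Rmult_le_compat_l; nra).
    assert (Hkr : k * (r * (5 / 6 * s)) <= k * (r * sin s))
      by (apply Rmult_le_compat_l; [lra|]; apply Rmult_le_compat_l; lra).
    rewrite Rabs_left1 by nra. nra.
  - unfold nsq; simpl. pose proof (sin2_cos2 t0). unfold Rsqr in *. nra.
  - unfold dot; simpl; ring.
  - unfold arc_pt, padd, pscal; simpl. rewrite cos_plus, sin_plus. f_equal; ring.
  - unfold arc_pt, padd, pscal; simpl. rewrite cos_minus, sin_minus. f_equal; ring.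
Qed.

Lemma segment_arc_step a b t0 k :
  a <> b -> 0 < t0 < 1 -> 0 < k -> arc_step (Seg a b) t0 k.
Proof.
  intros Hab Ht Hk.
  set (L := pnorm (psub b a)).
  assert (HL : 0 < L).
  { apply pnorm_pos. intros E. apply Hab. unfold psub in E.
    destruct a, b; simpl in *. injection E; intros. f_equal; lra. }
  set (s := Rmin (Rmin t0 (1 - t0)) (k / L)).
  assert (Hs : 0 < s /\ s <= t0 /\ s <= 1 - t0 /\ s * L <= k).
  { assert (0 < k / L) by (apply Rdiv_lt_0_compat; lra).
    pose proof (Rmin_l (Rmin t0 (1 - t0)) (k / L)).
    pose proof (Rmin_r (Rmin t0 (1 - t0)) (k / L)) as HkL.
    pose proof (Rmin_l t0 (1 - t0)). pose proof (Rmin_r t0 (1 - t0)).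
    repeat split; try (unfold s; lra).
    - unfold s; repeat apply Rmin_glb_lt; lra.
    - apply Rmult_le_compat_r with (r := L) in HkL; [|lra].
      replace (k / L * L) with k in HkL by (field; lra). exact HkL. }
  destruct Hs as (Hs0 & Hs1 & Hs2 & HsL).
  assert (HB : 0 < s * L) by (apply Rmult_lt_0_compat; lra).
  exists s, (s * L), 0, (0, 0).
  repeat split; simpl; try lra.
  - rewrite Rabs_R0. apply Rmult_le_pos; lra.
  - unfold nsq; simpl; lra.
  - unfold dot; simpl; ring.
  - fold L. unfold padd, pscal, psub; simpl. f_equal; field; lra.
  - fold L. unfold padd, pscal, psub; simpl. f_equal; field; lra.
Qed.

Lemma arc_step_interior A t0 k :
  arc_wf A -> arc_lo A < t0 < arc_hi A -> 0 < k <= 1 -> arc_step A t0 k.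
Proof.
  destruct A as [c r t1 t2 | a b]; simpl; intros Hwf Ht Hk.
  - apply circle_arc_step; [apply Hwf | exact Ht | exact Hk].
  - apply segment_arc_step; [exact Hwf | exact Ht | apply Hk].
Qed.

Lemma nsq_arc_dir A t : arc_wf A -> nsq (arc_dir A t) = 1.
Proof.
  destruct A as [c r t1 t2 | a b]; simpl; intros Hwf.
  - unfold nsq; simpl. pose proof (sin2_cos2 t). unfold Rsqr in *. nra.
  - assert (HL : 0 < pnorm (psub b a)).
    { apply pnorm_pos. intros E. apply Hwf. unfold psub in E.
      destruct a, b; simpl in *. injection E; intros. f_equal; lra. }
    pose proof (pnorm_sq (psub b a)) as Hsq.
    set (L := pnorm (psub b a)) in *.
    unfold nsq, pscal, psub in *; cbn [fst snd] in *.
    transitivity (/ (L * L) * ((fst b - fst a) ^ 2 + (snd b - snd a) ^ 2)); [field; lra|].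
    rewrite <- Hsq. field. lra.
Qed.

Lemma arc_far_tangent_dot_small A t0 eta :
  arc_wf A -> arc_lo A < t0 < arc_hi A -> 0 < eta <= 1 ->
  exists d, 0 < d <= 1 /\ forall q,
    (forall s, arc_lo A <= s <= arc_hi A -> 1 <= nsq (psub (arc_pt A s) q)) ->
    nsq (psub (arc_pt A t0) q) <= 1 + d ->
    Rabs (dot (psub (arc_pt A t0) q) (arc_dir A t0)) <= eta.
Proof.
  intros Hwf Ht Heta.
  set (k := eta / 4).
  assert (Hk : 0 < k <= 1 / 4) by (unfold k; lra).
  destruct (arc_step_interior A t0 k Hwf Ht ltac:(lra))
    as (s & B & C & W & Hs & Hlo & Hhi & HB & HC & HW & HUW & Hplus & Hminus).
  assert (Hd : 0 < k * B <= 1).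
  { split; [apply Rmult_lt_0_compat; lra|]. apply Rle_trans with (1 / 4 * 1); [|lra].
    apply Rmult_le_compat; lra. }
  exists (k * B). split; [exact Hd|].
  intros q Hfar Hnear.
  set (U := arc_dir A t0) in *.
  set (D := psub (arc_pt A t0) q) in *.
  pose proof (Hfar (t0 + s) ltac:(lra)) as Fplus.
  pose proof (Hfar (t0 - s) ltac:(lra)) as Fminus.
  rewrite Hplus, psub_padd_l in Fplus. rewrite Hminus, psub_padd_l in Fminus.
  pose proof (two_sided_dot_bound D U W B C (k * B) (nsq_arc_dir A t0 Hwf) HW HUW
                ltac:(lra) ltac:(lra) Hnear Fplus Fminus) as Hbound.
  assert (HC2 : C ^ 2 <= k * B).
  { pose proof (Rabs_pos C). rewrite <- (pow2_abs C). nra. }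
  assert (HB2 : B ^ 2 <= k * B) by nra.
  assert (Hfin : B * Rabs (dot D U) <= B * eta) by (unfold k in *; nra).
  apply Rmult_le_reg_l in Hfin; lra.
Qed.

Lemma tangent_unit_nsq S p u : tangent_unit S p u -> nsq u = 1.
Proof.
  intros (A & t & Hwf & _ & _ & _ & [-> | ->]); rewrite <- (nsq_arc_dir A t Hwf);
    [reflexivity | unfold nsq, pscal; simpl; ring].
Qed.

Lemma tangent_unit_opp S p u : tangent_unit S p u -> tangent_unit S p (pscal (-1) u).
Proof.
  intros (A & t & Hwf & Hbd & Ht & Hp & Hu). exists A, t.
  do 4 (split; [assumption|]).
  destruct Hu as [-> | ->]; [now right | left].
  unfold pscal; destruct (arc_dir A t); simpl; f_equal; ring.
Qed.

Lemma tangent_cw_exists S o p u : tangent_unit S p u -> cross (psub p o) u <> 0 ->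
  exists v, tangent_unit S p v /\ rotates_cw o p v.
Proof.
  intros Hu Hx. unfold rotates_cw.
  destruct (Rlt_dec (cross (psub p o) u) 0) as [Hneg|Hpos].
  - now exists u.
  - exists (pscal (-1) u). split; [now apply tangent_unit_opp|].
    replace (cross (psub p o) (pscal (-1) u)) with (- cross (psub p o) u)
      by (unfold cross, pscal; simpl; ring).
    lra.
Qed.

(* Combine [arc_far_tangent_dot_small] with a point [q] of [S] nearly
   realising the distance 1 from [p]; the slack [eta] is arbitrary. *)
Lemma mink_D_tangent_dot_le S o rho p u : 0 <= rho ->
  (forall q, S q -> nsq (psub q o) <= rho ^ 2) ->
  tangent_unit (mink_D S) p u -> Rabs (dot (psub p o) u) <= rho.
Proof.
  intros Hrho Hball Hu.
  pose proof (tangent_unit_nsq _ _ _ Hu) as Hu1.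
  destruct Hu as (A & t & Hwf & Hbd & Ht & -> & Hdir).
  assert (Hdir_abs : Rabs (dot (psub (arc_pt A t) o) u)
                     = Rabs (dot (psub (arc_pt A t) o) (arc_dir A t))).
  { destruct Hdir as [-> | ->]; [reflexivity|].
    rewrite <- Rabs_Ropp. f_equal. unfold dot, pscal; simpl; ring. }
  rewrite Hdir_abs. apply Rle_plus_epsilon. intros eta Heta.
  set (eta' := Rmin eta 1).
  assert (Heta' : 0 < eta' <= 1 /\ eta' <= eta)
    by (unfold eta'; repeat split; [apply Rmin_glb_lt; lra | apply Rmin_r | apply Rmin_l]).
  destruct (arc_far_tangent_dot_small A t eta' Hwf Ht ltac:(lra)) as [d [Hd Hsmall]].
  assert (Hp : boundary (mink_D S) (arc_pt A t)) by (apply Hbd; lra).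
  destruct (mink_D_boundary_near S _ d Hp Hd) as [q [Hq Hnear]].
  assert (Hpq : Rabs (dot (psub (arc_pt A t) q) (arc_dir A t)) <= eta').
  { apply Hsmall; [|exact Hnear].
    intros s Hs. apply (mink_D_boundary_far S); [apply Hbd, Hs | exact Hq]. }
  assert (Hqo : Rabs (dot (psub q o) (arc_dir A t)) <= rho).
  { apply Rabs_dot_le; [exact Hrho|]. rewrite (nsq_arc_dir A t Hwf).
    specialize (Hball q Hq). lra. }
  replace (dot (psub (arc_pt A t) o) (arc_dir A t))
    with (dot (psub (arc_pt A t) q) (arc_dir A t) + dot (psub q o) (arc_dir A t))
    by (unfold dot, psub; simpl; ring).
  pose proof (Rabs_triang (dot (psub (arc_pt A t) q) (arc_dir A t))
                          (dot (psub q o) (arc_dir A t))).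
  lra.
Qed.

Lemma mink_D_boundary_nsq_ge S o rho p : 0 <= rho ->
  (forall q, S q -> nsq (psub q o) <= rho ^ 2) ->
  boundary (mink_D S) p -> 1 - 3 * rho <= nsq (psub p o).
Proof.
  intros Hrho Hball Hp.
  destruct (mink_D_boundary_near S p 1 Hp ltac:(lra)) as [q [Hq Hnear]].
  pose proof (mink_D_boundary_far S p q Hp Hq) as Hfar.
  specialize (Hball q Hq).
  assert (Hcross : Rabs (dot (psub p q) (psub q o)) <= 3 / 2 * rho).
  { apply Rabs_dot_le; [lra|]. pose proof (nsq_ge0 (psub q o)). nra. }
  replace (psub p o) with (padd (psub p q) (psub q o))
    by (unfold padd, psub; simpl; f_equal; ring).
  rewrite nsq_padd.
  pose proof (Rle_abs (- dot (psub p q) (psub q o))). rewrite Rabs_Ropp in *.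
  pose proof (nsq_ge0 (psub q o)). lra.
Qed.

Lemma in_square_nsq_le o eps q : in_square o eps q -> nsq (psub q o) <= (3 / 4 * eps) ^ 2.
Proof.
  intros [Hx Hy]. unfold nsq, psub; cbn [fst snd].
  rewrite <- (pow2_abs (fst q - fst o)), <- (pow2_abs (snd q - snd o)).
  pose proof (Rabs_pos (fst q - fst o)). pose proof (Rabs_pos (snd q - snd o)).
  nra.
Qed.

Lemma is_cw_ang_acos P u : P <> (0, 0) -> nsq u = 1 -> cross P u < 0 ->
  is_cw_ang P u (acos (dot P u / pnorm P)).
Proof.
  intros HP Hu Hx.
  pose proof (pnorm_pos P HP) as HnP. pose proof (pnorm_sq P) as HnP2.
  assert (Hu1 : pnorm u = 1) by (pose proof (pnorm_sq u); pose proof (pnorm_ge0 u); nra).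
  assert (Hu0 : u <> (0, 0)) by (intros ->; unfold nsq in Hu; simpl in Hu; lra).
  set (a := pscal (/ pnorm P) P).
  set (c := dot P u / pnorm P).
  set (s := - cross a u).
  assert (Ha : nsq a = 1).
  { unfold a, nsq, pscal; simpl. unfold nsq in HnP2.
    transitivity ((fst P ^ 2 + snd P ^ 2) / (pnorm P * pnorm P)); [field; lra|].
    rewrite <- HnP2. field. lra. }
  assert (Hc : c = dot a u) by (unfold c, a, dot, pscal; simpl; field; lra).
  assert (Hs : 0 < s).
  { unfold s, a, cross, pscal; simpl.
    replace (- (/ pnorm P * fst P * snd u - / pnorm P * snd P * fst u))
      with (/ pnorm P * - cross P u) by (unfold cross; ring).
    apply Rmult_lt_0_compat; [apply Rinv_0_lt_compat|]; lra. }
  assert (Hcs : c ^ 2 + s ^ 2 = 1).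
  { pose proof (lagrange_identity a u) as L. rewrite Ha, Hu in L.
    rewrite Hc. unfold s. nra. }
  assert (Hc1 : -1 <= c <= 1) by nra.
  split; [exact HP|]. split; [exact Hu0|]. split.
  - pose proof (acos_bound c). pose proof PI_RGT_0. unfold c in *. lra.
  - cbv zeta. fold a c. rewrite Hu1, Rinv_1, cos_acos, sin_acos by exact Hc1.
    replace (sqrt (1 - c²)) with s
      by (rewrite <- (sqrt_Rsqr s) by lra; f_equal; unfold Rsqr; lra).
    rewrite Hc. unfold s, dot, cross, pscal; unfold nsq in Ha.
    destruct u as [u1 u2], a as [a1 a2]; cbn [fst snd] in *. f_equal.
    + transitivity (u1 * (a1 ^ 2 + a2 ^ 2)); [rewrite Ha; ring | ring].
    + transitivity (u2 * (a1 ^ 2 + a2 ^ 2)); [rewrite Ha; ring | ring].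
Qed.

(* [sin (4 e) >= 4 e - (4 e)^3 / 6 >= e] for [e <= 1/10]. *)
Lemma Rabs_asin_le c e : 0 < e <= 1 / 10 -> Rabs c <= e -> Rabs (asin c) <= 4 * e.
Proof.
  intros He Hc. pose proof PI2_3_2.
  destruct (sin_bound (4 * e) 0 ltac:(lra) ltac:(lra)) as [Hsin _].
  unfold sin_approx, sin_term in Hsin; simpl in Hsin.
  assert (H4e : e < sin (4 * e)) by nra.
  assert (Hc' : - e <= c <= e) by (unfold Rabs in Hc; destruct (Rcase_abs c); lra).
  pose proof (sin_asin c ltac:(lra)) as Hsa. pose proof (asin_bound c).
  apply Rabs_le. split.
  - destruct (Rle_lt_dec (- (4 * e)) (asin c)) as [|Hlt]; [assumption|].
    apply sin_increasing_1 in Hlt; try lra. rewrite sin_neg, Hsa in Hlt. lra.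
  - destruct (Rle_lt_dec (asin c) (4 * e)) as [|Hlt]; [assumption|].
    apply sin_increasing_1 in Hlt; try lra.
Qed.

Lemma cw_ang_near_right P u e : 0 < e <= 1 / 10 -> P <> (0, 0) -> nsq u = 1 ->
  cross P u < 0 -> Rabs (dot P u) <= e * pnorm P ->
  exists th, is_cw_ang P u th /\ Rabs (th - PI / 2) <= 4 * e.
Proof.
  intros He HP Hu Hx Hdot.
  pose proof (pnorm_pos P HP) as HnP.
  set (c := dot P u / pnorm P).
  assert (Hc : Rabs c <= e).
  { unfold c, Rdiv. rewrite Rabs_mult, (Rabs_right (/ pnorm P))
      by (apply Rle_ge, Rlt_le, Rinv_0_lt_compat, HnP).
    apply Rmult_le_reg_r with (pnorm P); [exact HnP|].
    rewrite Rmult_assoc, Rinv_l by lra. lra. }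
  exists (acos c). split; [apply is_cw_ang_acos; assumption|].
  rewrite acos_asin by (unfold Rabs in Hc; destruct (Rcase_abs c); lra).
  replace (PI / 2 - asin c - PI / 2) with (- asin c) by ring.
  rewrite Rabs_Ropp. now apply Rabs_asin_le.
Qed.

Theorem mainTheorem9 (eps : R) (o : pt) (Rg : pt -> Prop) :
  0 < eps <= 1 / 10 ->
  circular_domain Rg ->
  (exists r, Rg r) ->
  (forall r, Rg r -> in_square o eps r) ->
  forall p, boundary (mink_D Rg) p -> non_vertex (mink_D Rg) p ->
    (exists u, tangent_unit (mink_D Rg) p u /\ rotates_cw o p u) /\
    (forall u, tangent_unit (mink_D Rg) p u -> rotates_cw o p u ->
       exists th, is_cw_ang (psub p o) u th /\ Rabs (th - PI / 2) <= 4 * eps).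
Proof.
  intros Heps _ _ Hsq p Hp [u0 Hu0].
  assert (Hball : forall q, Rg q -> nsq (psub q o) <= (3 / 4 * eps) ^ 2)
    by (intros q Hq; apply in_square_nsq_le, Hsq, Hq).
  assert (HP : (3 / 4) ^ 2 <= nsq (psub p o))
    by (pose proof (mink_D_boundary_nsq_ge Rg o (3 / 4 * eps) p ltac:(lra) Hball Hp); lra).
  assert (HPn : 3 / 4 <= pnorm (psub p o)) by (apply pnorm_ge_of_nsq; lra).
  assert (Hdot : forall u, tangent_unit (mink_D Rg) p u ->
            Rabs (dot (psub p o) u) <= eps * pnorm (psub p o)).
  { intros u Hu. apply Rle_trans with (3 / 4 * eps).
    - exact (mink_D_tangent_dot_le Rg o (3 / 4 * eps) p u ltac:(lra) Hball Hu).
    - rewrite (Rmult_comm eps). apply Rmult_le_compat_r; lra. }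
  split.
  - apply (tangent_cw_exists _ o p u0 Hu0). intros Hx.
    pose proof (lagrange_identity (psub p o) u0) as L.
    rewrite Hx, (tangent_unit_nsq _ _ _ Hu0) in L.
    specialize (Hdot u0 Hu0). rewrite <- (pow2_abs (dot (psub p o) u0)) in L.
    assert (Hsq2 : Rabs (dot (psub p o) u0) ^ 2 <= (eps * pnorm (psub p o)) ^ 2)
      by (apply pow_incr; split; [apply Rabs_pos | exact Hdot]).
    replace ((eps * pnorm (psub p o)) ^ 2) with (eps ^ 2 * nsq (psub p o)) in Hsq2
      by (rewrite <- pnorm_sq; ring).
    assert (eps ^ 2 * nsq (psub p o) <= 1 / 100 * nsq (psub p o))
      by (apply Rmult_le_compat_r; [apply nsq_ge0 | nra]).
    lra.
  - intros u Hu Hcw.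
    apply cw_ang_near_right; [exact Heps | | exact (tangent_unit_nsq _ _ _ Hu) | exact Hcw | now apply Hdot].
    intros E. rewrite E in HP. unfold nsq in HP; simpl in HP. lra.
Qed.
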